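(* Let $H$ be a Hilbert space, let $\mathbf{a}=[a_1,\dots,a_\ell]$ be a row and $\mathbf{b}=[b_1,\dots,b_\ell]^t$ a column of operators in $\mathcal{B}(H)$, and let $Tx=\sum_{j=1}^\ell a_jxb_j$ ($x\in\mathcal{B}(H)$). Then \[ \|T\|=\sup\left\{\left\|\sqrt{Q(\mathbf{b},\eta)^t}\,\mathbf{a}^*\right\|_{S1}:\eta\in H,\ \|\eta\|=1\right\}. \]
   Context: For $\eta\in H$, $Q(\mathbf{b},\eta)=(\langle b_j\eta,b_i\eta\rangle)_{i,j=1}^\ell\in M_\ell(\mathbb{C})$, which is positive semidefinite; $\sqrt{Q(\mathbf{b},\eta)^t}$ is the positive semidefinite square root of its transpose. $\mathbf{a}^*=[a_1^*,\dots,a_\ell^*]^t$ is a column of operators, and for a scalar matrix $\alpha=(\alpha_{jk})\in M_\ell(\mathbb{C})$, $\alpha\mathbf{a}^*$ is the column whose $j$-th entry is $\sum_k\alpha_{jk}a_k^*$. On $H^\ell$ define the norm $\|(\xi_1,\dots,\xi_\ell)\|_{S1}=\operatorname{trace}\sqrt{(\langle\xi_i,\xi_j\rangle)_{i,j=1}^\ell}$. For a column $\mathbf{c}=[c_1,\dots,c_\ell]^t$ of operators in $\mathcal{B}(H)$, regarded as an operator $H\to H^\ell$, $\xi\mapsto(c_1\xi,\dots,c_\ell\xi)$, $\|\mathbf{c}\|_{S1}$ denotes its operator norm from $H$ (Hilbert norm) to $(H^\ell,\|\cdot\|_{S1})$. $\|T\|$ is the operator norm on $\mathcal{B}(H)$.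 *)

From HB Require Import structures.
From mathcomp Require Import all_boot all_order all_algebra.
From mathcomp Require Import complex.
From mathcomp Require Import boolp classical_sets reals.

Set Implicit Arguments.
Unset Strict Implicit.
Unset Printing Implicit Defensive.

Import Order.TTheory GRing.Theory Num.Theory.
Local Open Scope ring_scope.
Local Open Scope classical_set_scope.

Section Hilbert.
Variable R : realType.
Local Notation C := R[i].
Variable H : lmodType C.
(* inner product, linear in the FIRST argument, conjugate-linear in the second *)
Variable ip : H -> H -> C.

Definition is_inner_product : Prop :=
  [/\ forall (a : C) (x y z : H), ip (a *: x + y) z = a * ip x z + ip y z,
      forall x y, ip y x = conjc (ip x y),
      forall x, 0 <= ip x x
    & forall x, ip x x = 0 -> x = 0].

Definition hnorm (x : H) : R := Num.sqrt (complex.Re (ip x x)).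

Definition hcomplete : Prop :=
  forall u : nat -> H,
    (forall e : R, 0 < e -> exists N : nat, forall m n : nat,
        (N <= m)%N -> (N <= n)%N -> hnorm (u m - u n) < e) ->
    exists x : H, forall e : R, 0 < e -> exists N : nat, forall n : nat,
        (N <= n)%N -> hnorm (u n - x) < e.

Definition is_hilbert : Prop := is_inner_product /\ hcomplete.

Definition bounded_op (f : H -> H) : Prop :=
  (forall (a : C) (x y : H), f (a *: x + y) = a *: f x + f y) /\
  exists M : R, forall x, hnorm (f x) <= M * hnorm x.

Definition opnorm (f : H -> H) : R :=
  sup [set hnorm (f x) | x in [set x | hnorm x <= 1]].

(* Hilbert-space adjoint (unique when it exists; exists for f in B(H)) *)
Definition is_adjoint (f g : H -> H) : Prop :=
  forall x y, ip (f x) y = ip x (g y).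

Definition adjoint (f : H -> H) : H -> H :=
  match pselect (exists g, is_adjoint f g) with
  | left e => projT1 (cid e)
  | right _ => fun _ => 0
  end.

Variable l : nat.

Definition psd (P : 'M[C]_l) : Prop :=
  forall v : 'cV[C]_l, 0 <= ((map_mx conjc v)^T *m P *m v) ord0 ord0.

Definition psd_sqrt (P : 'M[C]_l) : 'M[C]_l :=
  match pselect (exists S, psd S /\ S *m S = P) with
  | left e => projT1 (cid e)
  | right _ => 0
  end.

Definition gramQ (b : 'I_l -> H -> H) (eta : H) : 'M[C]_l :=
  \matrix_(i, j) ip (b j eta) (b i eta).

Definition S1vec (xi : 'I_l -> H) : R :=
  complex.Re (\tr (psd_sqrt (\matrix_(i, j) ip (xi i) (xi j)))).

(* ||c||_{S1}: operator norm of the column c : H -> (H^l, ||.||_{S1}) *)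
Definition S1col (c : 'I_l -> H -> H) : R :=
  sup [set S1vec (fun i => c i x) | x in [set x | hnorm x <= 1]].

Definition scal_col_adj (alpha : 'M[C]_l) (a : 'I_l -> H -> H) : 'I_l -> H -> H :=
  fun j x => \sum_(k < l) alpha j k *: adjoint (a k) x.

Definition Tmap (a b : 'I_l -> H -> H) (x : H -> H) : H -> H :=
  fun y => \sum_(j < l) a j (x (b j y)).

Definition Tnorm (a b : 'I_l -> H -> H) : R :=
  sup [set opnorm (Tmap a b x) | x in [set x | bounded_op x /\ opnorm x <= 1]].

End Hilbert.

(* For unit vectors [eta], [zeta] and a contraction [x],
   [<T x eta, zeta> = sum_j <x (b_j eta), a_j^* zeta>].  Diagonalising the Gram
   matrices [Q(b, eta)^t = P^2] and [Gram(P a^* zeta) = S^2] rewrites this pairing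
   as [sum_m <x f_m, rho_m>] with [|f_m| <= 1] and [rho] orthogonal with norms the
   eigenvalues of [S], so [|<T x eta, zeta>| <= tr S], the [S1]-norm of
   [sqrt(Q(b, eta)^t) a^* zeta]; a partial isometry [x] attains the bound.  Taking
   suprema over [x], [eta] and [zeta] gives the formula.  Completeness of [H] is
   used only to obtain the adjoints [a_j^*] from the Riesz representation theorem. *)

From Pilot Require Import Defs.
From mathcomp Require Import all_boot all_order all_algebra.
From mathcomp Require Import complex.
From mathcomp Require Import boolp classical_sets reals.
From mathcomp Require Import ring lra.

Set Implicit Arguments.
Unset Strict Implicit.
Unset Printing Implicit Defensive.

Import Order.TTheory GRing.Theory Num.Theory.
Local Open Scope complex_scope.
Local Open Scope ring_scope.
Local Open Scope sesquilinear_scope.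
Local Open Scope classical_set_scope.
Local Notation Re := complex.Re.
Local Notation normc := Normc.normc.

Lemma sum_mul_delta (S : pzSemiRingType) n (F : 'I_n -> S) i :
  \sum_j F j * (i == j)%:R = F i.
Proof.
rewrite (bigD1 i) //= eqxx mulr1 big1 ?addr0 // => j /negPf ji.
by rewrite eq_sym ji mulr0.
Qed.

Section ComplexModulus.
Variable R : rcfType.
Implicit Types z w : R[i].

Lemma normr_normc z : `|z| = (normc z)%:C.
Proof. by case: z. Qed.

Lemma normc_ge0 z : 0 <= normc z.
Proof. by rewrite -ler0c -normr_normc. Qed.

Lemma normc_conj z : normc z^* = normc z.
Proof. by apply: complexI; rewrite -!normr_normc norm_conjC. Qed.

Lemma Re_le_normc z : Re z <= normc z.
Proof. by rewrite -lecR -normr_normc; apply: le_trans (normc_ge_Re z); rewrite lecR ler_norm. Qed.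

Lemma normc_real (r : R) : normc r%:C = `|r|.
Proof. by apply: complexI; rewrite -normr_normc normc_def /= expr0n addr0 sqrtr_sqr. Qed.

Lemma mulCJ_normc z : z * z^* = (normc z ^+ 2)%:C.
Proof. by rewrite -normCK normr_normc rmorphXn. Qed.

Lemma normc_sum (I : Type) (r : seq I) (P : pred I) (F : I -> R[i]) :
  normc (\sum_(i <- r | P i) F i) <= \sum_(i <- r | P i) normc (F i).
Proof.
elim/big_ind2: _ => [|u u' v v' le_u le_v|//]; first by rewrite Normc.normc0.
exact: le_trans (le_normcD _ _) (lerD le_u le_v).
Qed.

End ComplexModulus.

(** * Inner product spaces *)

Section InnerProduct.
Variables (R : realType) (H : lmodType R[i]) (ip : H -> H -> R[i]).
Hypothesis hip : is_inner_product ip.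
Local Notation C := R[i].
Local Notation hnorm := (hnorm ip).
Implicit Types (x y z : H) (c : C).

Lemma ipDZl c x y z : ip (c *: x + y) z = c * ip x z + ip y z.
Proof. by case: hip. Qed.

Lemma ipC x y : ip y x = (ip x y)^*.
Proof. by case: hip. Qed.

Lemma ip_ge0 x : 0 <= ip x x.
Proof. by case: hip. Qed.

Lemma ip_eq0 x : ip x x = 0 -> x = 0.
Proof. by case: hip => _ _ _; apply. Qed.

Lemma ip0l z : ip 0 z = 0.
Proof.
have := ipDZl 1 0 0 z; rewrite scaler0 addr0 mul1r => h.
by apply: (addrI (ip 0 z)); rewrite addr0 -h.
Qed.

Lemma ipDl x y z : ip (x + y) z = ip x z + ip y z.
Proof. by have := ipDZl 1 x y z; rewrite scale1r mul1r. Qed.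

Lemma ipZl c x z : ip (c *: x) z = c * ip x z.
Proof. by rewrite -[c *: x]addr0 ipDZl ip0l addr0. Qed.

Lemma ipNl x z : ip (- x) z = - ip x z.
Proof. by rewrite -scaleN1r ipZl mulN1r. Qed.

Lemma ipBl x y z : ip (x - y) z = ip x z - ip y z.
Proof. by rewrite ipDl ipNl. Qed.

Lemma ip0r z : ip z 0 = 0.
Proof. by rewrite ipC ip0l conjC0. Qed.

Lemma ipDr x y z : ip z (x + y) = ip z x + ip z y.
Proof. by rewrite !(ipC _ z) ipDl rmorphD. Qed.

Lemma ipZr c x z : ip z (c *: x) = c^* * ip z x.
Proof. by rewrite !(ipC _ z) ipZl rmorphM. Qed.

Lemma ipNr x z : ip z (- x) = - ip z x.
Proof. by rewrite !(ipC _ z) ipNl rmorphN. Qed.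

Lemma ip_suml (I : Type) (r : seq I) (P : pred I) (f : I -> H) z :
  ip (\sum_(i <- r | P i) f i) z = \sum_(i <- r | P i) ip (f i) z.
Proof. by apply: (big_morph (ip^~ z)); [move=> ? ?; exact: ipDl | exact: ip0l]. Qed.

Lemma ip_sumr (I : Type) (r : seq I) (P : pred I) (f : I -> H) z :
  ip z (\sum_(i <- r | P i) f i) = \sum_(i <- r | P i) ip z (f i).
Proof. by apply: (big_morph (ip z)); [move=> ? ?; exact: ipDr | exact: ip0r]. Qed.

Definition sqnorm x : R := Re (ip x x).

Lemma ip_sqnorm x : ip x x = (sqnorm x)%:C.
Proof. by rewrite RRe_real // ger0_real // ip_ge0. Qed.

Lemma sqnorm_ge0 x : 0 <= sqnorm x.
Proof. by rewrite -lecR -ip_sqnorm ip_ge0. Qed.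

Lemma sqnorm_eq0 x : sqnorm x = 0 -> x = 0.
Proof. by move=> x0; apply: ip_eq0; rewrite ip_sqnorm x0. Qed.

Lemma hnorm_ge0 x : 0 <= hnorm x.
Proof. exact: sqrtr_ge0. Qed.

Lemma sqr_hnorm x : hnorm x ^+ 2 = sqnorm x.
Proof. by rewrite sqr_sqrtr // sqnorm_ge0. Qed.

Lemma hnorm_eq0 x : hnorm x = 0 -> x = 0.
Proof. by move=> x0; apply: sqnorm_eq0; rewrite -sqr_hnorm x0 expr0n. Qed.

Lemma hnorm0 : hnorm 0 = 0.
Proof. by rewrite /Defs.hnorm ip0l sqrtr0. Qed.

Lemma hnorm_le_of_sqnorm x y : sqnorm x <= sqnorm y -> hnorm x <= hnorm y.
Proof. by move=> le_xy; rewrite /Defs.hnorm ler_sqrt // sqnorm_ge0. Qed.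

Lemma sqnormD x y : sqnorm (x + y) = sqnorm x + sqnorm y + 2 * Re (ip x y).
Proof.
rewrite /sqnorm ipDl !ipDr (ipC x y).
case: (ip x x) => ? ?; case: (ip y y) => ? ?; case: (ip x y) => ? ? /=; ring.
Qed.

Lemma sqnormZ c x : sqnorm (c *: x) = normc c ^+ 2 * sqnorm x.
Proof. by rewrite /sqnorm ipZl ipZr mulrA mulCJ_normc ip_sqnorm -rmorphM. Qed.

Lemma sqnormN x : sqnorm (- x) = sqnorm x.
Proof. by rewrite -scaleN1r sqnormZ normcN Normc.normc1 expr1n mul1r. Qed.

Lemma hnormZ c x : hnorm (c *: x) = normc c * hnorm x.
Proof.
by rewrite /Defs.hnorm -/(sqnorm _) sqnormZ sqrtrM ?sqr_ge0 // sqrtr_sqr ger0_norm ?normc_ge0.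
Qed.

Lemma hnorm_opp x : hnorm (- x) = hnorm x.
Proof. by rewrite /Defs.hnorm -/(sqnorm _) sqnormN. Qed.

Lemma sqnorm_parallelogram x y :
  sqnorm (x + y) + sqnorm (x - y) = 2 * sqnorm x + 2 * sqnorm y.
Proof. rewrite !sqnormD sqnormN ipNr raddfN /=; lra. Qed.

Lemma sqnorm_sub_proj x y :
  sqnorm y * sqnorm (x - (ip x y / (sqnorm y)%:C) *: y) = sqnorm y * sqnorm x - normc (ip x y) ^+ 2.
Proof.
have [y0|y_neq0] := eqVneq (sqnorm y) 0.
  by rewrite y0 (sqnorm_eq0 y0) ip0r Normc.normc0 expr0n !mul0r subr0.
rewrite -scaleNr sqnormD sqnormZ ipZr; case: (ip x y) => p q /=.
rewrite !(sqr_sqrtr (addr_ge0 (sqr_ge0 _) (sqr_ge0 _))) !expr0n !addr0 /=.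
by field; exact: y_neq0.
Qed.

Lemma sqr_normc_ip_le x y : normc (ip x y) ^+ 2 <= sqnorm x * sqnorm y.
Proof.
have := mulr_ge0 (sqnorm_ge0 y) (sqnorm_ge0 (x - (ip x y / (sqnorm y)%:C) *: y)).
by rewrite sqnorm_sub_proj subr_ge0 mulrC.
Qed.

Lemma min_sqnorm_ip_eq0 w y : (forall t : C, sqnorm w <= sqnorm (w + t *: y)) ->
  ip w y = 0.
Proof.
move=> w_min; have [y0|y_neq0] := eqVneq (sqnorm y) 0.
  by rewrite (sqnorm_eq0 y0) ip0r.
have y_gt0 : 0 < sqnorm y by rewrite lt_neqAle eq_sym y_neq0 sqnorm_ge0.
have := w_min (- (ip w y / (sqnorm y)%:C)).
rewrite scaleNr -(ler_pM2l y_gt0) sqnorm_sub_proj => le_w.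
apply: Normc.eq0_normc; apply/eqP; rewrite -sqrf_eq0 eq_le sqr_ge0 andbT; lra.
Qed.

Lemma normc_ip_le x y : normc (ip x y) <= hnorm x * hnorm y.
Proof.
rewrite -(ler_pXn2r (n:=2)) ?nnegrE ?normc_ge0 ?mulr_ge0 ?hnorm_ge0 //.
by rewrite exprMn !sqr_hnorm sqr_normc_ip_le.
Qed.

Lemma hnorm_triangle x y : hnorm (x + y) <= hnorm x + hnorm y.
Proof.
rewrite -(ler_pXn2r (n:=2)) ?nnegrE ?addr_ge0 ?hnorm_ge0 //.
rewrite sqr_hnorm sqnormD sqrrD !sqr_hnorm.
have := le_trans (Re_le_normc (ip x y)) (normc_ip_le x y); lra.
Qed.

Lemma hnorm_sum (I : finType) (f : I -> H) : hnorm (\sum_i f i) <= \sum_i hnorm (f i).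
Proof.
elim/big_ind2: _ => [|u u' v v' le_u le_v|//]; first by rewrite hnorm0.
exact: le_trans (hnorm_triangle _ _) (lerD le_u le_v).
Qed.

End InnerProduct.

Section LinearOperator.
Variables (R : realType) (H : lmodType R[i]).

Definition lin_op (f : H -> H) := forall (c : R[i]) x y, f (c *: x + y) = c *: f x + f y.

Variable f : H -> H.
Hypothesis f_lin : lin_op f.

Lemma lin_op0 : f 0 = 0.
Proof.
have := f_lin 1 0 0; rewrite scaler0 addr0 scale1r => h.
by apply: (addrI (f 0)); rewrite addr0 -h.
Qed.

Lemma lin_opD x y : f (x + y) = f x + f y.
Proof. by have := f_lin 1 x y; rewrite !scale1r. Qed.

Lemma lin_opZ c x : f (c *: x) = c *: f x.
Proof. by have := f_lin c x 0; rewrite lin_op0 !addr0. Qed.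

Lemma lin_op_sum (I : Type) (r : seq I) (P : pred I) (g : I -> H) :
  f (\sum_(i <- r | P i) g i) = \sum_(i <- r | P i) f (g i).
Proof. exact: (big_morph f lin_opD lin_op0). Qed.

End LinearOperator.

Section Families.
Variables (R : realType) (H : lmodType R[i]) (ip : H -> H -> R[i]).
Hypothesis hip : is_inner_product ip.
Local Notation C := R[i].
Variable l : nat.
Implicit Types (f g h : 'I_l -> H) (M N : 'M[C]_l) (c d : 'I_l -> C).

Definition lincomb M f i : H := \sum_j M i j *: f j.

Definition gram f : 'M[C]_l := \matrix_(i, j) ip (f i) (f j).

Lemma lincomb_mul M N f i : lincomb M (lincomb N f) i = lincomb (M *m N) f i.
Proof.
rewrite /lincomb; under eq_bigr do rewrite scaler_sumr.
rewrite exchange_big /=; apply: eq_bigr => k _.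
by rewrite mxE scaler_suml; apply: eq_bigr => j _; rewrite scalerA.
Qed.

Lemma lincomb1 f i : lincomb 1%:M f i = f i.
Proof.
rewrite /lincomb (bigD1 i) //= big1 ?addr0 => [|j ji]; first by rewrite mxE eqxx scale1r.
by rewrite mxE eq_sym (negPf ji) scale0r.
Qed.

Lemma lincomb_unitary M f i : M \is unitarymx -> lincomb (M^t*) (lincomb M f) i = f i.
Proof. by move=> /unitarymxP uM; rewrite lincomb_mul (mulmx1C uM) lincomb1. Qed.

Lemma lincomb_diag (r : 'rV[C]_l) f i : lincomb (diag_mx r) f i = r 0 i *: f i.
Proof.
rewrite /lincomb (bigD1 i) //= big1 ?addr0 => [|j ji]; first by rewrite mxE eqxx mulr1n.
by rewrite mxE eq_sym (negPf ji) mulr0n scale0r.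
Qed.

Lemma lin_op_lincomb x M f i : lin_op x -> x (lincomb M f i) = lincomb M (x \o f) i.
Proof.
by move=> x_lin; rewrite /lincomb lin_op_sum //; apply: eq_bigr => j _; rewrite lin_opZ.
Qed.

Lemma gram_lincomb M f : gram (lincomb M f) = M *m gram f *m M^t*.
Proof.
apply/matrixP => i k; rewrite !mxE /lincomb (ip_suml hip).
under eq_bigr do rewrite (ipZl hip) (ip_sumr hip) mulr_sumr.
under [RHS]eq_bigr do rewrite !mxE mulr_suml.
rewrite exchange_big /=; apply: eq_bigr => j _; apply: eq_bigr => m _.
by rewrite (ipZr hip) !mxE; ring.
Qed.

Lemma sum_ip_lincomb M f g :
  \sum_i ip (lincomb M f i) (g i) = \sum_j ip (f j) (lincomb (M^t*) g j).
Proof.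
rewrite /lincomb; under eq_bigr do rewrite (ip_suml hip).
under [RHS]eq_bigr do rewrite (ip_sumr hip).
rewrite exchange_big /=; apply: eq_bigr => j _; apply: eq_bigr => i _.
by rewrite (ipZl hip) (ipZr hip) !mxE conjCK.
Qed.

Definition orthonormal_on g (p : pred 'I_l) :=
  forall i j, ip (g i) (g j) = ((i == j) && p i)%:R.

Definition orthogonal_family h d := forall i j, ip (h i) (h j) = (i == j)%:R * (d i * d i).

Lemma sqnorm_comb_orthonormal g p c : orthonormal_on g p ->
  sqnorm ip (\sum_i c i *: g i) = \sum_i (p i)%:R * normc (c i) ^+ 2.
Proof.
move=> g_on; apply: complexI; rewrite -ip_sqnorm // rmorph_sum (ip_suml hip).
apply: eq_bigr => i _; rewrite (ipZl hip) (ip_sumr hip).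
under eq_bigr do rewrite (ipZr hip) g_on andbC -mulnb natrM mulrA.
rewrite sum_mul_delta mulrA mulCJ_normc.
by case: (p i); rewrite ?mulr1 ?mul1r ?mulr0 ?mul0r.
Qed.

Lemma sqnorm_comb_orthonormal_le g p c : orthonormal_on g p ->
  sqnorm ip (\sum_i c i *: g i) <= \sum_i normc (c i) ^+ 2.
Proof.
move=> g_on; rewrite (sqnorm_comb_orthonormal c g_on); apply: ler_sum => i _.
by case: (p i); rewrite ?mul1r ?mul0r ?sqr_ge0.
Qed.

Lemma orthonormal_on_out g p i : orthonormal_on g p -> ~~ p i -> g i = 0.
Proof. by move=> g_on pi; apply: (ip_eq0 hip); rewrite g_on eqxx (negPf pi). Qed.

Lemma bessel g p z : orthonormal_on g p ->
  \sum_i normc (ip z (g i)) ^+ 2 <= sqnorm ip z.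
Proof.
move=> g_on; set c := fun i => ip z (g i).
have sqnorm_proj : sqnorm ip (\sum_i c i *: g i) = \sum_i normc (c i) ^+ 2.
  rewrite (sqnorm_comb_orthonormal c g_on); apply: eq_bigr => i _.
  case pi : (p i); first by rewrite mul1r.
  by rewrite /c (orthonormal_on_out g_on) ?pi // (ip0r hip) Normc.normc0 expr0n mulr0.
have ip_proj : Re (ip z (\sum_i c i *: g i)) = \sum_i normc (c i) ^+ 2.
  rewrite (ip_sumr hip) raddf_sum; apply: eq_bigr => i _.
  by rewrite (ipZr hip) mulrC mulCJ_normc.
have := sqnorm_ge0 hip (z - \sum_i c i *: g i).
by rewrite sqnormD // sqnormN // sqnorm_proj (ipNr hip) raddfN /= ip_proj; lra.
Qed.

Lemma hnorm_orthogonal_family h d i : (forall i, 0 <= d i) -> orthogonal_family h d ->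
  hnorm ip (h i) = Re (d i).
Proof.
move=> d_ge0 h_orth; have d_real := RRe_real (ger0_real (d_ge0 i)).
rewrite /Defs.hnorm h_orth eqxx mul1r -d_real -rmorphM /= sqrtr_sqr ger0_norm //.
by rewrite -ler0c d_real.
Qed.

Definition normalize d h i : H := if d i == 0 then 0 else (d i)^-1 *: h i.

Lemma orthonormal_normalize d h : (forall i, 0 <= d i) -> orthogonal_family h d ->
  orthonormal_on (normalize d h) (fun i => d i != 0).
Proof.
move=> d_ge0 h_orth i j; rewrite /normalize.
have [di0|di0] := eqVneq (d i) 0; first by rewrite (ip0l hip) andbF.
have [dj0|dj0] := eqVneq (d j) 0.
  by rewrite (ip0r hip); have [ij|//] := eqVneq i j; rewrite ij dj0 eqxx in di0.
rewrite (ipZl hip) (ipZr hip) h_orth andbT.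
have [<-|ij] := eqVneq i j; last by rewrite mulr0n mul0r !mulr0.
rewrite mulr1n mul1r (conj_Creal (ger0_real _)) ?invr_ge0 //.
by rewrite mulrA -mulrA (mulrA _ (d i)) mulVf // mul1r mulVf.
Qed.

Lemma normalizeK d h i : orthogonal_family h d -> h i = d i *: normalize d h i.
Proof.
move=> h_orth; rewrite /normalize; have [di0|di0] := eqVneq (d i) 0.
  by rewrite scaler0; apply: (ip_eq0 hip); rewrite h_orth di0 !mulr0.
by rewrite scalerA mulfV // scale1r.
Qed.

End Families.

(** * The Riesz representation theorem *)

Section NearestPoint.
Variables (R : realType) (H : lmodType R[i]) (ip : H -> H -> R[i]).
Hypothesis hip : is_inner_product ip.
Local Notation C := R[i].
Local Notation hnorm := (hnorm ip).
Local Notation sqnorm := (sqnorm ip).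

Variable K : H -> Prop.
Hypothesis K_midpoint : forall k k', K k -> K k' -> K ((2^-1 : C) *: (k + k')).

(* As the midpoint of [k] and [k'] lies in [K], the parallelogram law bounds
   [sqnorm (k - k')] by [2 sqnorm (z0 - k) + 2 sqnorm (z0 - k') - 4 del ^+ 2],
   which is at most [4 ((del + eps) ^+ 2 - del ^+ 2) <= c * eps] far out. *)
Lemma minimizing_seq_cauchy z0 del (ks : nat -> H) : 0 <= del ->
  (forall k, K k -> del <= hnorm (z0 - k)) ->
  (forall n, K (ks n) /\ hnorm (z0 - ks n) < del + n.+1%:R^-1) ->
  forall e, 0 < e -> exists N, forall m n, (N <= m)%N -> (N <= n)%N ->
    hnorm (ks m - ks n) < e.
Proof.
move=> del_ge0 del_le ks_min e e_gt0.
pose c := 4 * (2 * del + 1).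
have c_ge0 : 0 <= c / e ^+ 2 by rewrite divr_ge0 ?sqr_ge0 // /c; lra.
pose N := Num.Def.archi_bound (c / e ^+ 2).
have N_gt : c / e ^+ 2 < N%:R := archi_boundP c_ge0.
exists N => m n Nm Nn.
pose eps : R := N.+1%:R^-1.
have eps_gt0 : 0 < eps by rewrite invr_gt0 ltr0Sn.
have eps_le1 : eps <= 1 by rewrite invf_le1 ?ltr0Sn // ler1n.
have ks_near j : (N <= j)%N -> sqnorm (z0 - ks j) <= (del + eps) ^+ 2.
  move=> Nj; rewrite -(sqr_hnorm hip) ler_pXn2r ?nnegrE ?hnorm_ge0 //; last by lra.
  apply: le_trans (ltW (proj2 (ks_min j))) _; rewrite lerD2l.
  by rewrite lef_pV2 ?posrE ?ltr0Sn // ler_nat ltnS.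
have mid_far : 4 * del ^+ 2 <= sqnorm ((z0 - ks n) + (z0 - ks m)).
  have -> : (z0 - ks n) + (z0 - ks m) = (2 : C) *: (z0 - (2^-1 : C) *: (ks n + ks m)).
    rewrite scalerBr scalerA mulfV ?pnatr_eq0 // scale1r scaler_nat mulr2n.
    by rewrite opprD addrACA.
  have normc2 : normc (2 : C) = 2 by have := normcMn (1 : C) 2; rewrite Normc.normc1.
  rewrite (sqnormZ hip) normc2 -(sqr_hnorm hip).
  have := del_le _ (K_midpoint (proj1 (ks_min n)) (proj1 (ks_min m))).
  move=> mid_le; rewrite -(ler_pXn2r (n := 2)) ?nnegrE ?hnorm_ge0 // in mid_le; lra.
have := sqnorm_parallelogram hip (z0 - ks n) (z0 - ks m).
have -> : (z0 - ks n) - (z0 - ks m) = ks m - ks n by rewrite opprB addrC addrA subrK.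
move=> par; have sqnorm_le : sqnorm (ks m - ks n) <= c * eps.
  by have := ks_near _ Nn; have := ks_near _ Nm; rewrite /c; nra.
have ceps_lt : c * eps < e ^+ 2.
  have e2_gt0 : 0 < e ^+ 2 by rewrite exprn_gt0.
  have c_lt : c < N%:R * e ^+ 2 by rewrite -ltr_pdivrMr.
  have epsN : eps * (N%:R + 1) = 1 by rewrite natr1 mulVf ?pnatr_eq0.
  nra.
by rewrite -(ltr_pXn2r (n := 2)) ?nnegrE ?hnorm_ge0 ?ltW // (sqr_hnorm hip); lra.
Qed.

End NearestPoint.

Section Riesz.
Variables (R : realType) (H : lmodType R[i]) (ip : H -> H -> R[i]).
Hypothesis hH : is_hilbert ip.
Local Notation C := R[i].
Local Notation hnorm := (hnorm ip).
Let hip : is_inner_product ip := proj1 hH.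

Variable phi : H -> C.
Hypothesis phi_lin : forall c x y, phi (c *: x + y) = c * phi x + phi y.

Lemma lin_form0 : phi 0 = 0.
Proof.
have := phi_lin 1 0 0; rewrite scaler0 addr0 mul1r => h.
by apply: (addrI (phi 0)); rewrite addr0 -h.
Qed.

Lemma lin_formZ c x : phi (c *: x) = c * phi x.
Proof. by have := phi_lin c x 0; rewrite !addr0 lin_form0 addr0. Qed.

Lemma lin_formB x y : phi (x - y) = phi x - phi y.
Proof. by rewrite addrC -scaleN1r phi_lin mulN1r addrC. Qed.

Variable M : R.
Hypotheses (M_ge0 : 0 <= M) (phi_bounded : forall x, normc (phi x) <= M * hnorm x).

Lemma lin_form_limit (ks : nat -> H) k :
  (forall e, 0 < e -> exists N, forall n, (N <= n)%N -> hnorm (ks n - k) < e) ->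
  (forall n, phi (ks n) = 0) -> phi k = 0.
Proof.
move=> ks_cvg ks0; apply: Normc.eq0_normc; apply/eqP.
rewrite eq_le normc_ge0 andbT; apply/ler_addgt0Pr => eps eps_gt0; rewrite add0r.
have [N ksN] := ks_cvg (eps / (M + 1)) (divr_gt0 eps_gt0 (ltr_wpDl M_ge0 ltr01)).
rewrite -[phi k]subr0 -(ks0 N) -lin_formB.
apply: le_trans (phi_bounded _) _; rewrite -(hnorm_opp hip) opprB.
apply: le_trans (ler_wpM2l M_ge0 (ltW (ksN N (leqnn N)))) _.
rewrite mulrCA ler_piMr ?(ltW eps_gt0) // ler_pdivrMr ?mul1r ?lerDl ?ler01 //.
exact: ltr_wpDl M_ge0 ltr01.
Qed.

Lemma exists_nearest_in_kernel z0 : exists k, phi k = 0 /\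
  forall k', phi k' = 0 -> hnorm (z0 - k) <= hnorm (z0 - k').
Proof.
pose E := [set hnorm (z0 - k) | k in [set k : H | phi k = 0]].
have E_inf : has_inf E.
  split; first by exists (hnorm (z0 - 0)), 0 => //; exact: lin_form0.
  by exists 0 => _ [k _ <-]; exact: hnorm_ge0.
pose del := inf E.
have del_le k : phi k = 0 -> del <= hnorm (z0 - k).
  by move=> k0; apply: ge_inf (proj2 E_inf) _ _; exists k.
have del_ge0 : 0 <= del.
  by apply: lb_le_inf (proj1 E_inf) _ => _ [k _ <-]; exact: hnorm_ge0.
have near_del n : exists k, phi k = 0 /\ hnorm (z0 - k) < del + n.+1%:R^-1.
  have n_gt0 : 0 < n.+1%:R^-1 :> R by rewrite invr_gt0 ltr0Sn.
  by have [_ [k k0 <-] lt_k] := inf_adherent n_gt0 E_inf; exists k.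
have [ks ks_min] := choice near_del.
have mid0 k k' : phi k = 0 -> phi k' = 0 -> phi ((2^-1 : C) *: (k + k')) = 0.
  by move=> k0 k'0; rewrite lin_formZ -[k]scale1r phi_lin k0 k'0 mulr0 addr0 mulr0.
have [k ks_cvg] := proj2 hH _ (minimizing_seq_cauchy hip mid0 del_ge0 del_le ks_min).
have k0 : phi k = 0 := lin_form_limit ks_cvg (fun n => proj1 (ks_min n)).
exists k; split => // k' k'0.
apply: le_trans (del_le _ k'0); apply/ler_addgt0Pr => eps eps_gt0.
have eps2_gt0 : 0 < eps / 2 by rewrite divr_gt0.
have [N1 ksN1] := ks_cvg _ eps2_gt0.
have N2_gt : 2 / eps < (Num.Def.archi_bound (2 / eps))%:R.
  by rewrite archi_boundP // divr_ge0 // ltW.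
pose n := maxn N1 (Num.Def.archi_bound (2 / eps)).
have inv_le : n.+1%:R^-1 <= eps / 2.
  rewrite -[eps / 2]invrK lef_pV2 ?posrE ?ltr0Sn ?invr_gt0 // invf_div.
  by apply: le_trans (ltW N2_gt) _; rewrite ler_nat (leq_trans (leq_maxr N1 _)).
rewrite -(subrK (ks n) z0) -addrA; apply: le_trans (hnorm_triangle hip _ _) _.
apply: le_trans (lerD (ltW (proj2 (ks_min n))) (ltW (ksN1 n (leq_maxl _ _)))) _.
by rewrite -addrA lerD2l {2}(splitr eps) lerD2r.
Qed.

Lemma riesz : exists y, forall x, phi x = ip x y.
Proof.
have [phi0|/existsNP [x1 /eqP phix1]] := pselect (forall x, phi x = 0).
  by exists 0 => x; rewrite phi0 (ip0r hip).
have [k [k0 k_min]] := exists_nearest_in_kernel ((phi x1)^-1 *: x1).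
set w := _ - k in k_min.
have phi_w : phi w = 1 by rewrite lin_formB lin_formZ mulVf // k0 subr0.
have w_orth k' : phi k' = 0 -> ip k' w = 0.
  move=> k'0; rewrite (ipC hip) (min_sqnorm_ip_eq0 hip) ?conjC0 // => t.
  have kt0 : phi (k - t *: k') = 0 by rewrite lin_formB lin_formZ k'0 k0 mulr0 subr0.
  rewrite -!(sqr_hnorm hip) ler_pXn2r ?nnegrE ?hnorm_ge0 //.
  by have := k_min _ kt0; rewrite opprB addrA addrAC.
have w_neq0 : sqnorm ip w != 0.
  apply/eqP => /(sqnorm_eq0 hip) w0.
  by move: phi_w; rewrite w0 lin_form0 => /eqP; rewrite eq_sym oner_eq0.
exists ((sqnorm ip w)^-1%:C *: w) => x.
have := w_orth (x - phi x *: w); rewrite lin_formB lin_formZ phi_w mulr1 subrr => /(_ erefl).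
rewrite (ipBl hip) (ipZl hip) (ip_sqnorm hip) => /eqP; rewrite subr_eq0 => /eqP xw.
by rewrite (ipZr hip) xw conj_Creal ?complex_real // mulrCA -rmorphM mulVf // mulr1.
Qed.

End Riesz.

Section BoundedOperators.
Variables (R : realType) (H : lmodType R[i]) (ip : H -> H -> R[i]).
Hypothesis hip : is_inner_product ip.
Local Notation hnorm := (hnorm ip).
Local Notation opnorm := (opnorm ip).
Local Notation bounded_op := (bounded_op ip).
Implicit Types (f : H -> H) (x : H).

Lemma bounded_op_ge0 f : bounded_op f ->
  exists2 M, 0 <= M & forall x, hnorm (f x) <= M * hnorm x.
Proof.
move=> [_ [M fM]]; exists (Num.max M 0); first by rewrite le_max lexx orbT.
by move=> x; apply: le_trans (fM x) _; rewrite ler_wpM2r ?hnorm_ge0 // le_max lexx.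
Qed.

Lemma hnorm_le_unit f c : lin_op f -> (forall x, hnorm x = 1 -> hnorm (f x) <= c) ->
  forall x, hnorm (f x) <= c * hnorm x.
Proof.
move=> f_lin f_le x; have [x0|x_neq0] := eqVneq (hnorm x) 0.
  by rewrite x0 mulr0 (hnorm_eq0 hip x0) lin_op0 // hnorm0.
have x_gt0 : 0 < hnorm x by rewrite lt_neqAle eq_sym x_neq0 hnorm_ge0.
have normcV : normc (hnorm x)^-1%:C = (hnorm x)^-1.
  by rewrite normc_real ger0_norm // invr_ge0 ltW.
have := f_le ((hnorm x)^-1%:C *: x).
rewrite lin_opZ // !(hnormZ hip) normcV mulVf // => /(_ erefl).
by rewrite mulrC -ler_pdivlMr ?invr_gt0 // invrK mulrC.
Qed.

Lemma opnorm_le f c : (forall x, hnorm x <= 1 -> hnorm (f x) <= c) -> opnorm f <= c.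
Proof.
move=> f_le; apply: ge_sup => [|_ [x x1 <-]]; last exact: f_le.
by exists (hnorm (f 0)), 0 => //=; rewrite (hnorm0 hip) ler01.
Qed.

Lemma hnorm_le_opnorm f x : bounded_op f -> hnorm x <= 1 -> hnorm (f x) <= opnorm f.
Proof.
move=> /bounded_op_ge0 [M M_ge0 fM] x1; apply: ub_le_sup; last by exists x.
exists M => _ [y y1 <-]; apply: le_trans (fM y) _.
by rewrite -[leRHS]mulr1 ler_wpM2l.
Qed.

Lemma opnorm_ge0 f : bounded_op f -> 0 <= opnorm f.
Proof.
move=> f_bd; apply: le_trans (hnorm_ge0 _ (f 0)) (hnorm_le_opnorm f_bd _).
by rewrite (hnorm0 hip) ler01.
Qed.

Lemma hnorm_le_opnormM f x : bounded_op f -> hnorm (f x) <= opnorm f * hnorm x.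
Proof.
move=> f_bd; apply: (hnorm_le_unit (proj1 f_bd)) => y y1.
by apply: hnorm_le_opnorm; rewrite ?y1.
Qed.

Lemma contraction_of_opnorm_le1 f : bounded_op f -> opnorm f <= 1 ->
  forall x, hnorm (f x) <= hnorm x.
Proof.
move=> f_bd f1 x; apply: le_trans (hnorm_le_opnormM x f_bd) _.
by rewrite ler_piMl ?hnorm_ge0.
Qed.

Lemma opnorm_le1_of_contraction f : lin_op f -> (forall x, hnorm (f x) <= hnorm x) ->
  bounded_op f /\ opnorm f <= 1.
Proof.
move=> f_lin f_le; split; first by split; last by exists 1 => x; rewrite mul1r.
by apply: opnorm_le => x x1; apply: le_trans (f_le x) x1.
Qed.

End BoundedOperators.

Section Adjoint.
Variables (R : realType) (H : lmodType R[i]) (ip : H -> H -> R[i]).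
Hypothesis hH : is_hilbert ip.
Let hip : is_inner_product ip := proj1 hH.

Lemma adjointP f : bounded_op ip f -> forall x y, ip (f x) y = ip x (adjoint ip f y).
Proof.
move=> f_bd; have [M M_ge0 fM] := bounded_op_ge0 f_bd.
have rep y : exists v, forall x, ip (f x) y = ip x v.
  apply: (@riesz _ _ _ hH (fun x => ip (f x) y) _ (M * hnorm ip y)).
  - by move=> c x z; rewrite (proj1 f_bd) (ipDl hip) (ipZl hip).
  - by rewrite mulr_ge0 ?hnorm_ge0.
  - move=> x; apply: le_trans (normc_ip_le hip _ _) _.
    by rewrite mulrAC ler_wpM2r ?hnorm_ge0.
rewrite /adjoint; case: pselect => [adj|]; first by case: (cid adj).
by case; exists (fun y => projT1 (cid (rep y))) => x y; case: (cid (rep y)).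
Qed.

End Adjoint.

(** * Positive semidefinite matrices *)

Section PsdMatrices.
Variables (R : realType) (l : nat).
Local Notation C := R[i].
Implicit Types (A B : 'M[C]_l) (v : 'cV[C]_l).

Definition qf A v : C := ((map_mx conjc v)^T *m A *m v) 0 0.

Lemma qfE A v : qf A v = \sum_a \sum_b (v a 0)^* * A a b * v b 0.
Proof.
rewrite /qf mxE; under eq_bigr do rewrite mxE mulr_suml.
rewrite exchange_big /=; apply: eq_bigr => a _; apply: eq_bigr => b _.
by rewrite !mxE.
Qed.

Lemma qfB A B v : qf (A - B) v = qf A v - qf B v.
Proof. by rewrite /qf mulmxBr mulmxBl mxE [X in _ + X]mxE. Qed.

Lemma qf_trmxC A v : qf (A^t*) v = (qf A v)^*.
Proof.
rewrite !qfE rmorph_sum exchange_big /=; apply: eq_bigr => a _.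
rewrite rmorph_sum; apply: eq_bigr => b _.
by rewrite !mxE !rmorphM /= conjCK; ring.
Qed.

Definition qf_vec (i j : 'I_l) (c : C) : 'cV[C]_l := \col_k ((i == k)%:R + c * (j == k)%:R).

Lemma qf_vecE A i j c :
  qf A (qf_vec i j c) = A i i + c * A i j + c^* * A j i + c * c^* * A j j.
Proof.
have sum_vec (c' : C) (F : 'I_l -> C) :
    \sum_b F b * ((i == b)%:R + c' * (j == b)%:R) = F i + c' * F j.
  under eq_bigr do rewrite mulrDr mulrCA.
  by rewrite big_split /= -mulr_sumr !sum_mul_delta.
rewrite qfE.
transitivity (\sum_a (A a i + c * A a j) * ((i == a)%:R + c^* * (j == a)%:R)).
  apply: eq_bigr => a _; rewrite -(sum_vec c (A a)) mulr_suml; apply: eq_bigr => b _.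
  by rewrite !mxE rmorphD rmorphM /= !rmorph_nat; ring.
by rewrite sum_vec; ring.
Qed.

(* Polarisation: test [qf B] on [e_i + c e_j] for [c = 0, 1, 'i]. *)
Lemma qf_eq0_mx B : (forall v, qf B v = 0) -> B = 0.
Proof.
move=> B0; have Bii i : B i i = 0.
  by have := B0 (qf_vec i i 0); rewrite qf_vecE conjC0 !mul0r !addr0.
apply/matrixP => i j; rewrite mxE.
have := B0 (qf_vec i j 1); rewrite qf_vecE !Bii conjC1 => sum1.
have Bji : B j i = - B i j by apply: (addIr (B i j)); rewrite addNr -[RHS]sum1; ring.
have := B0 (qf_vec i j 'i); rewrite qf_vecE !Bii Bji conjCi => sumi.
have : (2 * 'i) * B i j = 0 by rewrite -[RHS]sumi; ring.
by move/eqP; rewrite !mulf_eq0 pnatr_eq0 (negPf (neq0Ci _)) => /eqP.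
Qed.

Lemma psd_hermitian A : psd A -> A^t* = A.
Proof.
move=> A_psd; apply/eqP; rewrite -subr_eq0; apply/eqP; apply: qf_eq0_mx => v.
by rewrite qfB qf_trmxC (conj_Creal (ger0_real (A_psd v))) subrr.
Qed.

Lemma psd_spectral A : psd A ->
  A = (spectralmx A)^t* *m diag_mx (spectral_diag A) *m spectralmx A.
Proof.
move=> A_psd; rewrite -invmx_unitary ?spectral_unitarymx //.
by apply/orthomx_spectralP/normalmxP; rewrite psd_hermitian.
Qed.

Lemma psd_spectral_diag_ge0 A i : psd A -> 0 <= spectral_diag A 0 i.
Proof.
move=> A_psd; set V := spectralmx A.
have /unitarymxP V_unit : V \is unitarymx := spectral_unitarymx A.
have diagE : V *m A *m V^t* = diag_mx (spectral_diag A).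
  by rewrite [in LHS](psd_spectral A_psd) !mulmxA V_unit mul1mx -!mulmxA V_unit mulmx1.
have -> : spectral_diag A 0 i = (V *m A *m V^t*) i i by rewrite diagE mxE eqxx mulr1n.
have := A_psd (col i (V^t*)); congr (_ <= _).
rewrite !mxE; apply: eq_bigr => b _; rewrite !mxE.
by congr (_ * _); apply: eq_bigr => a _; rewrite !mxE conjcK.
Qed.

Lemma psd_unitary_diag (V : 'M[C]_l) (s : 'rV[C]_l) : (forall i, 0 <= s 0 i) ->
  psd (V^t* *m diag_mx s *m V).
Proof.
move=> s_ge0 v; rewrite -!mulmxA mulmxA.
have -> : (map_mx conjc v)^T *m V^t* = (map_mx conjc (V *m v))^T.
  apply/matrixP => a b; rewrite !mxE rmorph_sum; apply: eq_bigr => k _.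
  by rewrite !mxE rmorphM mulrC.
rewrite mul_diag_mx mxE; apply: sumr_ge0 => k _; rewrite !mxE mulrCA mulrC.
by rewrite mulr_ge0 ?s_ge0 // mulrC mul_conjC_ge0.
Qed.

Lemma psd_sqrt_exists A : psd A -> exists S, psd S /\ S *m S = A.
Proof.
move=> A_psd; set V := spectralmx A; set d := spectral_diag A.
have /unitarymxP V_unit : V \is unitarymx := spectral_unitarymx A.
pose s := \row_j sqrtC (d 0 j).
exists (V^t* *m diag_mx s *m V); split.
  by apply: psd_unitary_diag => i; rewrite mxE sqrtC_ge0 psd_spectral_diag_ge0.
rewrite [RHS](psd_spectral A_psd) -!mulmxA (mulmxA V) V_unit mul1mx.
rewrite (mulmxA (diag_mx s)) mulmx_diag; congr (_ *m (diag_mx _ *m _)); apply/rowP => j.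
by rewrite !mxE -expr2 sqrtCK.
Qed.

Lemma psd_sqrtP A : psd A -> psd (psd_sqrt A) /\ psd_sqrt A *m psd_sqrt A = A.
Proof.
move=> A_psd; rewrite /psd_sqrt; case: pselect => [S_ex|]; first by case: (cid S_ex).
by have := psd_sqrt_exists A_psd.
Qed.

Lemma sum_sqr_normc_mul_unitary (Y : 'M[C]_l) (c : 'I_l -> C) : Y \is unitarymx ->
  \sum_m normc (\sum_i c i * Y i m) ^+ 2 = \sum_i normc (c i) ^+ 2.
Proof.
move=> /unitarymxP Y_unit; apply: complexI; rewrite !rmorph_sum /=.
under eq_bigr do rewrite -mulCJ_normc rmorph_sum mulr_suml.
under [RHS]eq_bigr do rewrite -mulCJ_normc.
rewrite exchange_big /=; apply: eq_bigr => i _.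
under eq_bigr do rewrite mulr_sumr.
rewrite exchange_big /=.
transitivity (\sum_j c i * (c j)^* * (Y *m Y^t*) i j).
  apply: eq_bigr => j _; rewrite !mxE mulr_sumr; apply: eq_bigr => m _.
  by rewrite rmorphM /= !mxE; ring.
by rewrite Y_unit; under eq_bigr do rewrite mxE; rewrite sum_mul_delta.
Qed.

Lemma sum_sqr_normc_col_unitary (Y : 'M[C]_l) m : Y \is unitarymx ->
  \sum_i normc (Y i m) ^+ 2 = 1.
Proof.
move=> /unitarymxP /mulmx1C /(congr1 (fun M : 'M[C]_l => M m m)).
rewrite !mxE eqxx mulr1n => Y_unit; apply: complexI; rewrite rmorph_sum rmorph1 /= -Y_unit.
by apply: eq_bigr => i _; rewrite -mulCJ_normc !mxE mulrC.
Qed.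

End PsdMatrices.

(** * Trace duality *)

Section GramMatrices.
Variables (R : realType) (H : lmodType R[i]) (ip : H -> H -> R[i]).
Hypothesis hip : is_inner_product ip.
Variable l : nat.

Lemma psd_gram (f : 'I_l -> H) : psd (gram ip f).
Proof.
move=> v; change (0 <= qf (gram ip f) v).
suff -> : qf (gram ip f) v = ip (\sum_a (v a 0)^* *: f a) (\sum_a (v a 0)^* *: f a).
  exact: ip_ge0.
rewrite qfE (ip_suml hip); apply: eq_bigr => a _.
rewrite (ipZl hip) (ip_sumr hip) mulr_sumr; apply: eq_bigr => b _.
by rewrite (ipZr hip) conjCK mxE; ring.
Qed.

Lemma gram_spectral (A : 'M[R[i]]_l) (f : 'I_l -> H) : psd A -> A *m A = gram ip f ->
  orthogonal_family ip (lincomb (spectralmx A) f) (spectral_diag A 0).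
Proof.
move=> A_psd A2 i j; set V := spectralmx A; set d := spectral_diag A.
have /unitarymxP V_unit : V \is unitarymx := spectral_unitarymx A.
have := congr1 (fun N : 'M_l => N i j) (gram_lincomb hip V f).
rewrite /= [in X in X = _ -> _]mxE => ->; rewrite -A2 (psd_spectral A_psd) -/V -/d.
rewrite !mulmxA V_unit mul1mx -!mulmxA V_unit mulmx1.
rewrite !mulmxA -(mulmxA _ V) V_unit mulmx1.
rewrite mulmx_diag !mxE; case: eqP => _; rewrite ?mulr1n ?mulr0n ?mul1r ?mul0r //.
Qed.

End GramMatrices.

Section TraceDuality.
Variables (R : realType) (H : lmodType R[i]) (ip : H -> H -> R[i]).
Hypothesis hip : is_inner_product ip.
Local Notation C := R[i].
Local Notation hnorm := (hnorm ip).
Variable l : nat.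
Variables (u v : 'I_l -> H).
Local Notation P := (psd_sqrt (gram ip u)).
Local Notation S := (psd_sqrt (gram ip (lincomb P v))).

Let P_psd : psd P := (psd_sqrtP (psd_gram hip u)).1.
Let P2 : P *m P = gram ip u := (psd_sqrtP (psd_gram hip u)).2.
Let S_psd : psd S := (psd_sqrtP (psd_gram hip (lincomb P v))).1.
Let S2 : S *m S = gram ip (lincomb P v) := (psd_sqrtP (psd_gram hip (lincomb P v))).2.

Let V := spectralmx P.
Let d := spectral_diag P.
Let W := spectralmx S.
Let e := spectral_diag S.
Let g := normalize (d 0) (lincomb V u).
Let rho := lincomb W (lincomb P v).
Let Y := V *m W^t*.

Let d_ge0 i : 0 <= d 0 i. Proof. exact: psd_spectral_diag_ge0. Qed.
Let e_ge0 i : 0 <= e 0 i. Proof. exact: psd_spectral_diag_ge0. Qed.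

Let g_on : orthonormal_on ip g (fun i => d 0 i != 0).
Proof. exact: (orthonormal_normalize hip d_ge0 (gram_spectral hip P_psd P2)). Qed.

Let rho_orth : orthogonal_family ip rho (e 0).
Proof. exact: gram_spectral. Qed.

Let Y_unitary : Y \is unitarymx.
Proof. by rewrite mul_unitarymx ?trmxC_unitary ?spectral_unitarymx. Qed.

Let lincomb_Y_rho i : lincomb Y rho i = d 0 i *: lincomb V v i.
Proof.
have /unitarymxP W_unit : W \is unitarymx := spectral_unitarymx S.
have /unitarymxP V_unit : V \is unitarymx := spectral_unitarymx P.
have VP : V *m P = diag_mx d *m V.
  by rewrite [in LHS](psd_spectral P_psd) -/V -/d !mulmxA V_unit mul1mx.
rewrite !lincomb_mul /Y -!mulmxA (mulmxA (W^t*)) (mulmx1C W_unit) mul1mx VP.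
by rewrite -lincomb_mul lincomb_diag.
Qed.

Let pairing x : lin_op x ->
  \sum_j ip (x (u j)) (v j) = \sum_i ip (x (g i)) (lincomb Y rho i).
Proof.
move=> x_lin; transitivity (\sum_j ip (x (lincomb (V^t*) (lincomb V u) j)) (v j)).
  by apply: eq_bigr => j _; rewrite lincomb_unitary ?spectral_unitarymx.
under eq_bigr do rewrite (lin_op_lincomb _ _ _ x_lin).
rewrite (sum_ip_lincomb hip) trmxCK; apply: eq_bigr => i _.
rewrite lincomb_Y_rho /= (normalizeK hip _ (gram_spectral hip P_psd P2)) -/g.
by rewrite lin_opZ // (ipZl hip) (ipZr hip) (conj_Creal (ger0_real (d_ge0 i))).
Qed.

Let trace_S : \tr S = \sum_m e 0 m.
Proof.
rewrite [in LHS](psd_spectral S_psd) mxtrace_mulC mulmxA.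
by rewrite (unitarymxP (spectral_unitarymx S)) mul1mx mxtrace_diag.
Qed.

Lemma trace_duality_le x : lin_op x -> (forall z, hnorm (x z) <= hnorm z) ->
  normc (\sum_j ip (x (u j)) (v j)) <= Re (\tr S).
Proof.
move=> x_lin x_contr; rewrite pairing // trace_S raddf_sum -[Y]trmxCK -(sum_ip_lincomb hip).
under eq_bigr do rewrite -(lin_op_lincomb _ _ _ x_lin).
(* The [m]-th term is [ip (x f) (rho m)] with [hnorm f <= 1] and [hnorm (rho m) = e 0 m]. *)
apply: le_trans (normc_sum _ _ _) _; apply: ler_sum => m _.
apply: le_trans (normc_ip_le hip _ _) _.
rewrite (hnorm_orthogonal_family _ e_ge0 rho_orth) -[leRHS]mul1r.
apply: ler_wpM2r; first by rewrite -ler0c RRe_real ?ger0_real.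
apply: le_trans (x_contr _) _.
rewrite -(ler_pXn2r (n := 2)) ?nnegrE ?hnorm_ge0 // expr1n (sqr_hnorm hip).
apply: le_trans (sqnorm_comb_orthonormal_le hip _ g_on) _.
rewrite (eq_bigr (fun i => normc (Y i m) ^+ 2)) => [|i _]; last by rewrite !mxE normc_conj.
by rewrite sum_sqr_normc_col_unitary.
Qed.

Lemma trace_duality_eq : exists x, [/\ lin_op x, forall z, hnorm (x z) <= hnorm z &
  \sum_j ip (x (u j)) (v j) = (Re (\tr S))%:C].
Proof.
set r := normalize (e 0) rho.
have r_on : orthonormal_on ip r (fun m => e 0 m != 0).
  exact: (orthonormal_normalize hip e_ge0 rho_orth).
set w := lincomb Y r.
pose x z := \sum_i ip z (g i) *: w i.
have x_lin : lin_op x.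
  move=> c z z'; rewrite /x scaler_sumr -big_split /=; apply: eq_bigr => i _.
  by rewrite (ipDZl hip) scalerDl scalerA.
exists x; split => // [z|].
  apply: (hnorm_le_of_sqnorm hip).
  have -> : x z = \sum_m (\sum_i ip z (g i) * Y i m) *: r m.
    rewrite /x /w /lincomb; under eq_bigr do rewrite scaler_sumr.
    rewrite exchange_big /=; apply: eq_bigr => m _.
    by rewrite scaler_suml; apply: eq_bigr => i _; rewrite scalerA.
  apply: le_trans (sqnorm_comb_orthonormal_le hip _ r_on) _.
  by rewrite (sum_sqr_normc_mul_unitary _ Y_unitary) (bessel hip _ g_on).
rewrite pairing //.
transitivity (\sum_i ip (w i) (lincomb Y rho i)).
  apply: eq_bigr => i _; rewrite /x (ip_suml hip).
  under eq_bigr do rewrite (ipZl hip) g_on.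
  have [di0|di0] := eqVneq (d 0 i) 0.
    by rewrite lincomb_Y_rho di0 scale0r (ip0r hip) big1 // => k _; rewrite andbF mul0r.
  under eq_bigr do rewrite andbT mulrC.
  by rewrite sum_mul_delta.
rewrite (sum_ip_lincomb hip); under eq_bigr do rewrite lincomb_unitary //.
have r_rho m : ip (r m) (rho m) = e 0 m.
  rewrite [rho m](normalizeK hip _ rho_orth) (ipZr hip) (conj_Creal (ger0_real (e_ge0 m))).
  by rewrite r_on eqxx /=; case: eqP => [->|_]; rewrite ?mulr0 ?mulr1.
under eq_bigr do rewrite r_rho.
by rewrite -trace_S RRe_real // ger0_real // trace_S sumr_ge0.
Qed.

End TraceDuality.

(** * The norm of an elementary operator *)

Lemma sup_le_ub_ge0 (R : realType) (A : set R) c : 0 <= c -> (forall x, A x -> x <= c) ->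
  sup A <= c.
Proof.
move=> c_ge0 A_le; have [A_ne|A0] := pselect (A !=set0); first exact: ge_sup A_ne A_le.
by rewrite (_ : A = set0) ?sup0 //; apply/seteqP; split => // x Ax; apply: A0; exists x.
Qed.

Section TwoSidedMultiplication.
Variables (R : realType) (H : lmodType R[i]) (ip : H -> H -> R[i]).
Hypothesis hH : is_hilbert ip.
Let hip : is_inner_product ip := proj1 hH.
Local Notation hnorm := (hnorm ip).
Local Notation opnorm := (opnorm ip).
Local Notation bounded_op := (bounded_op ip).
Variables (l : nat) (a b : 'I_l -> H -> H).
Hypotheses (ha : forall j, bounded_op (a j)) (hb : forall j, bounded_op (b j)).
Local Notation Tmap := (Tmap a b).
Local Notation Tnorm := (Tnorm ip a b).

Definition S1norm_at eta zeta : R :=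
  S1vec ip (fun i => scal_col_adj ip (psd_sqrt (gramQ ip b eta)^T) a i zeta).

Local Notation S1col_at eta := (S1col ip (scal_col_adj ip (psd_sqrt (gramQ ip b eta)^T) a)).
Local Notation S1sup := (sup [set S1col_at eta | eta in [set eta | hnorm eta = 1]]).

Lemma S1col_atE eta :
  S1col_at eta = sup [set S1norm_at eta zeta | zeta in [set zeta | hnorm zeta <= 1]].
Proof. by []. Qed.

Lemma S1norm_atE eta zeta : S1norm_at eta zeta =
  Re (\tr (psd_sqrt (gram ip (lincomb (psd_sqrt (gram ip (b^~ eta)))
                                       (fun j => adjoint ip (a j) zeta))))).
Proof.
rewrite /S1norm_at (_ : _^T = gram ip (b^~ eta)) //.
by apply/matrixP => i j; rewrite !mxE.
Qed.

Lemma ip_Tmap x eta zeta :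
  ip (Tmap x eta) zeta = \sum_j ip (x (b j eta)) (adjoint ip (a j) zeta).
Proof. by rewrite /Tmap (ip_suml hip); apply: eq_bigr => j _; rewrite (adjointP hH). Qed.

Lemma normc_ip_Tmap_le x eta zeta : lin_op x -> (forall z, hnorm (x z) <= hnorm z) ->
  normc (ip (Tmap x eta) zeta) <= S1norm_at eta zeta.
Proof.
by move=> x_lin x_contr; rewrite ip_Tmap S1norm_atE trace_duality_le.
Qed.

Lemma exists_ip_Tmap_eq eta zeta : exists x,
  [/\ bounded_op x, opnorm x <= 1 & ip (Tmap x eta) zeta = (S1norm_at eta zeta)%:C].
Proof.
rewrite S1norm_atE.
have [x [x_lin x_contr x_eq]] := trace_duality_eq hip (b^~ eta) (fun j => adjoint ip (a j) zeta).
have [x_bd x1] := opnorm_le1_of_contraction hip x_lin x_contr.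
by exists x; split; rewrite // ip_Tmap.
Qed.

Lemma S1norm_at_ge0 eta zeta : 0 <= S1norm_at eta zeta.
Proof.
have zero_lin : lin_op (fun _ : H => 0) by move=> c y z; rewrite scaler0 addr0.
apply: le_trans (normc_ge0 _) (normc_ip_Tmap_le eta zeta zero_lin _) => z.
by rewrite (hnorm0 hip) hnorm_ge0.
Qed.

Lemma hnorm_Tmap_le x y : bounded_op x ->
  hnorm (Tmap x y) <= opnorm x * (\sum_j opnorm (a j) * opnorm (b j)) * hnorm y.
Proof.
move=> x_bd; rewrite mulr_sumr mulr_suml; apply: le_trans (hnorm_sum hip _) _.
apply: ler_sum => j _; apply: le_trans (hnorm_le_opnormM hip _ (ha j)) _.
rewrite [leRHS](_ : _ = opnorm (a j) * (opnorm x * (opnorm (b j) * hnorm y))); last by ring.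
apply: ler_wpM2l; first exact: opnorm_ge0.
apply: le_trans (hnorm_le_opnormM hip _ x_bd) _.
by apply: ler_wpM2l; [exact: opnorm_ge0 | exact: hnorm_le_opnormM].
Qed.

Lemma bounded_Tmap x : bounded_op x -> bounded_op (Tmap x).
Proof.
move=> x_bd; split => [c y y'|]; last first.
  by exists (opnorm x * \sum_j opnorm (a j) * opnorm (b j)) => y; exact: hnorm_Tmap_le.
rewrite /Tmap scaler_sumr -big_split /=; apply: eq_bigr => j _.
by rewrite (proj1 (hb j)) (proj1 x_bd) (proj1 (ha j)).
Qed.

Let zero_bounded : bounded_op (fun _ => 0) /\ opnorm (fun _ => 0) <= 1.
Proof.
apply: (opnorm_le1_of_contraction hip) => [c y z|z]; first by rewrite scaler0 addr0.
by rewrite (hnorm0 hip) hnorm_ge0.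
Qed.

Lemma opnorm_Tmap_le_Tnorm x : bounded_op x -> opnorm x <= 1 -> opnorm (Tmap x) <= Tnorm.
Proof.
move=> x_bd x1; apply: ub_le_sup; last by exists x.
exists (\sum_j opnorm (a j) * opnorm (b j)) => _ [y [y_bd y1] <-].
have sum_ge0 : 0 <= \sum_j opnorm (a j) * opnorm (b j).
  by apply: sumr_ge0 => j _; rewrite mulr_ge0 ?opnorm_ge0.
apply: (opnorm_le hip) => z z1; apply: le_trans (hnorm_Tmap_le z y_bd) _.
apply: le_trans (ler_piMr _ z1) _; first by rewrite mulr_ge0 ?opnorm_ge0.
by rewrite ler_piMl.
Qed.

Lemma Tnorm_ge0 : 0 <= Tnorm.
Proof.
have [zero_bd zero1] := zero_bounded.
exact: le_trans (opnorm_ge0 hip (bounded_Tmap zero_bd)) (opnorm_Tmap_le_Tnorm zero_bd zero1).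
Qed.

Lemma S1norm_at_le_Tnorm eta zeta : hnorm eta <= 1 -> hnorm zeta <= 1 ->
  S1norm_at eta zeta <= Tnorm.
Proof.
move=> eta1 zeta1; have [x [x_bd x1 x_eq]] := exists_ip_Tmap_eq eta zeta.
have -> : S1norm_at eta zeta = Re (ip (Tmap x eta) zeta) by rewrite x_eq.
apply: le_trans (Re_le_normc _) _; apply: le_trans (normc_ip_le hip _ _) _.
apply: le_trans (ler_piMr (hnorm_ge0 _ _) zeta1) _.
apply: le_trans (hnorm_le_opnorm (bounded_Tmap x_bd) eta1) _.
exact: opnorm_Tmap_le_Tnorm.
Qed.

Lemma S1col_le_Tnorm eta : hnorm eta <= 1 -> S1col_at eta <= Tnorm.
Proof.
move=> eta1; rewrite S1col_atE; apply: ge_sup => [|_ [zeta zeta1 <-]].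
  by exists (S1norm_at eta 0), 0 => //=; rewrite (hnorm0 hip) ler01.
exact: S1norm_at_le_Tnorm.
Qed.

Lemma sup_S1col_le_Tnorm : S1sup <= Tnorm.
Proof.
by apply: sup_le_ub_ge0 Tnorm_ge0 _ => _ [eta /= eta1 <-]; rewrite S1col_le_Tnorm ?eta1.
Qed.

Lemma S1norm_at_le_sup eta zeta : hnorm eta = 1 -> hnorm zeta <= 1 ->
  S1norm_at eta zeta <= S1sup.
Proof.
move=> eta1 zeta1; apply: (@le_trans _ _ (S1col_at eta)).
  rewrite S1col_atE; apply: ub_le_sup; last by exists zeta.
  by exists Tnorm => _ [z z1 <-]; rewrite S1norm_at_le_Tnorm ?eta1.
apply: ub_le_sup; last by exists eta.
by exists Tnorm => _ [e /= e1 <-]; rewrite S1col_le_Tnorm ?e1.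
Qed.

Lemma sup_S1col_ge0 : 0 <= S1sup.
Proof.
have [[eta eta1]|no_unit] := pselect (exists eta, hnorm eta = 1).
  have zero1 : hnorm 0 <= 1 by rewrite (hnorm0 hip) ler01.
  exact: le_trans (S1norm_at_ge0 eta 0) (S1norm_at_le_sup eta1 zero1).
have no_S1col : [set S1col_at eta | eta in [set eta | hnorm eta = 1]] = set0.
  by apply/seteqP; split => // y [eta eta1 _]; apply: no_unit; exists eta.
by rewrite no_S1col sup0.
Qed.

Lemma hnorm_Tmap_le_sup x eta : bounded_op x -> opnorm x <= 1 -> hnorm eta = 1 ->
  hnorm (Tmap x eta) <= S1sup.
Proof.
move=> x_bd x1 eta1; set t := Tmap x eta.
have [t0|t_neq0] := eqVneq (hnorm t) 0; first by rewrite t0 sup_S1col_ge0.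
have t_gt0 : 0 < hnorm t by rewrite lt_neqAle eq_sym t_neq0 hnorm_ge0.
pose zeta := (hnorm t)^-1%:C *: t.
have zeta1 : hnorm zeta = 1.
  by rewrite (hnormZ hip) normc_real ger0_norm ?invr_ge0 ?hnorm_ge0 // mulVf.
have ip_t_zeta : normc (ip t zeta) = hnorm t.
  rewrite (ipZr hip) conj_Creal ?complex_real // (ip_sqnorm hip) -rmorphM normc_real.
  by rewrite -(sqr_hnorm hip) expr2 mulrA mulVf // mul1r ger0_norm ?hnorm_ge0.
have zeta_le1 : hnorm zeta <= 1 by rewrite zeta1.
rewrite -ip_t_zeta; apply: le_trans _ (S1norm_at_le_sup eta1 zeta_le1).
have [x_lin _] := x_bd.
exact: normc_ip_Tmap_le x_lin (contraction_of_opnorm_le1 hip x_bd x1).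
Qed.

Lemma Tnorm_le_sup_S1col : Tnorm <= S1sup.
Proof.
apply: sup_le_ub_ge0 sup_S1col_ge0 _ => _ [x [x_bd x1] <-].
apply: (opnorm_le hip) => y y1.
have Tx_le := hnorm_le_unit hip (proj1 (bounded_Tmap x_bd)) (fun _ => hnorm_Tmap_le_sup x_bd x1).
by apply: le_trans (Tx_le y) _; rewrite ler_piMr ?sup_S1col_ge0.
Qed.

End TwoSidedMultiplication.

Unset Implicit Arguments.

Theorem theorem1p10 (R : realType) (H : lmodType R[i]) (ip : H -> H -> R[i])
  (hH : is_hilbert ip) (l : nat) (a b : 'I_l -> H -> H)
  (ha : forall j, bounded_op ip (a j)) (hb : forall j, bounded_op ip (b j)) :
  Tnorm ip a b =
  sup [set S1col ip (scal_col_adj ip (psd_sqrt (gramQ ip b eta)^T) a)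
      | eta in [set eta | hnorm ip eta = 1]].
Proof.
by apply/eqP; rewrite eq_le Tnorm_le_sup_S1col // sup_S1col_le_Tnorm.
Qed.
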